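(* Let $X=\{a_1,\dots,a_\ell\}$ be a finite set of $\ell$ distinct points and $N\ge 2$, and let $\mu_*$ be an extreme point of $\mathcal{P}_{N\text{-}rep}(X^2)$ with one-point marginal $\lambda$. Then: (a) $\mu_*$ is the unique maximizer over $\mu\in\mathcal{P}_{N\text{-}rep}(X^2)$ of $$J_\lambda[\mu]=\frac{2N}{N-1}\sum_{i=1}^\ell\lambda_i(M_1\mu)_i+W[\mu];$$ (b) in particular, $\mu_*$ is the unique maximizer of $W[\mu]$ over $\mu\in\mathcal{P}_{N\text{-}rep}(X^2)$ subject to $M_1\mu=\lambda$.
   Context: Probability measures on $X$ are identified with vectors $(\lambda_i)_{i}$, $\lambda_i=\lambda(\{a_i\})$; for a measure $\mu$ on $X^2$, $\mu_{ij}=\mu(\{(a_i,a_j)\})$ and $(M_1\mu)_i=\sum_j\mu_{ij}$ is its first marginal. A probability measure $\gamma$ on $X^N$ is symmetric if $\gamma(A_1\times\cdots\times A_N)=\gamma(A_{\sigma(1)}\times\cdots\times A_{\sigma(N)})$ for all $A_i\subseteq X$ and all permutations $\sigma$; a probability measure $\mu$ on $X^2$ is $N$-representable if $\mu(A)=\gamma(A\times X^{N-2})$ for all $A\subseteq X^2$ for some symmetric probability measure $\gamma$ on $X^N$; $\mathcal{P}_{N\text{-}rep}(X^2)$ is the set of these. $W[\mu]=\int_{X\times X}d(x,y)^p\,d\mu(x,y)=\sum_{i\ne j}\mu_{ij}$ is the Wasserstein cost ($1\le p<\infty$) with respect to the discrete metric $d(x,y)=1$ if $x\neq y$, $d(x,x)=0$.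 *)

(* Discrete measures on finite sets as nonnegative real-valued
   finite functions (weights of atoms). *)
From mathcomp Require Import all_boot all_order fingroup perm all_algebra.
Set Implicit Arguments. Unset Strict Implicit. Unset Printing Implicit Defensive.
Import Order.TTheory GRing.Theory Num.Theory.
Local Open Scope ring_scope.

Section Defs.
Variables (R : realFieldType) (X : finType).

Definition mass (T : finType) (m : {ffun T -> R}) (A : {set T}) : R :=
  \sum_(t in A) m t.

Definition is_prob (T : finType) (m : {ffun T -> R}) : Prop :=
  (forall t, 0 <= m t) /\ \sum_t m t = 1.

Definition prodset (N : nat) (A : 'I_N -> {set X}) : {set {ffun 'I_N -> X}} :=
  [set x : {ffun 'I_N -> X} | [forall i, x i \in A i]].

Definition symmetric_prob (N : nat) (g : {ffun {ffun 'I_N -> X} -> R}) : Prop :=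
  is_prob g /\
  forall (A : 'I_N -> {set X}) (s : 'S_N),
    mass g (prodset A) = mass g (prodset (fun i => A (s i))).

(* the set A x X^{N-2} in X^N, for A a subset of X^2 (first two coordinates) *)
Definition cyl (N : nat) (A : {set X * X}) : {set {ffun 'I_N -> X}} :=
  [set x : {ffun 'I_N -> X} | [exists i : 'I_N, exists j : 'I_N,
             [&& val i == 0%N, val j == 1%N & (x i, x j) \in A]]].

Definition N_rep (N : nat) (mu : {ffun X * X -> R}) : Prop :=
  is_prob mu /\
  exists g : {ffun {ffun 'I_N -> X} -> R}, symmetric_prob g /\
    forall A : {set X * X}, mass mu A = mass g (cyl N A).

Definition extreme_point (S : {ffun X * X -> R} -> Prop) (mu : {ffun X * X -> R}) : Prop :=
  S mu /\
  forall (mu1 mu2 : {ffun X * X -> R}) (t : R), S mu1 -> S mu2 -> 0 < t < 1 ->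
    (forall p, mu p = t * mu1 p + (1 - t) * mu2 p) -> mu1 = mu2.

Definition M1 (mu : {ffun X * X -> R}) : {ffun X -> R} :=
  [ffun x => \sum_y mu (x, y)].

Definition ddisc (x y : X) : R := if x == y then 0 else 1.

(* Wasserstein cost W[mu] = \int d(x,y)^p dmu; for the discrete metric
   d^p = d for every p >= 1, so W[mu] = sum_{i<>j} mu_ij *)
Definition Wcost (mu : {ffun X * X -> R}) : R :=
  \sum_q ddisc q.1 q.2 * mu q.

Definition Jfun (N : nat) (lam : {ffun X -> R}) (mu : {ffun X * X -> R}) : R :=
  (2 * N%:R) / (N%:R - 1) * (\sum_x lam x * M1 mu x) + Wcost mu.

End Defs.

From mathcomp Require Import all_boot all_order fingroup perm all_algebra.
From mathcomp Require Import ring.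
Set Implicit Arguments. Unset Strict Implicit. Unset Printing Implicit Defensive.
Import Order.TTheory GRing.Theory Num.Theory.
Local Open Scope ring_scope.

(* An N-representable [mu] is the pair marginal of a permutation-invariant
   probability [g] on X^N.  Averaging over the N(N-1) ordered pairs of sites
   writes it as the [g]-mixture of the measures [occ_pair (occ x)], which only
   depend on the occupation numbers of the configuration [x].  Conditioning
   [g] on a level set of [occ] and on its complement splits [mu] into two
   N-representable measures, so an extreme point is a single [occ_pair m0].
   [M1] and [Wcost] are linear, and for [lam = M1 (occ_pair m0)]
   J(occ_pair m0) - J(occ_pair m) = |m0 - m|^2 / (N(N-1)); hence
   J(mustar) - J(mu) is a [g]-average of nonnegative terms, and it vanishes only
   when [g] lives on configurations with occupation [m0], i.e. [mu = mustar].
   Part (b) is part (a) with the marginal term of J frozen. *)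

Lemma sum_delta (R : pzSemiRingType) (T : finType) (P : pred T) (q : T)
    (F : T -> R) :
  \sum_(p | P p) (q == p)%:R * F p = (P q)%:R * F q.
Proof.
rewrite big_mkcond (bigD1 q) //= eqxx mul1r big1 ?addr0 => [|p /negbTE qp].
  by case: (P q); rewrite ?mul1r ?mul0r.
by rewrite eq_sym qp mul0r; case: (P p).
Qed.

Lemma sum_delta1 (R : pzSemiRingType) (T : finType) (P : pred T) (q : T) :
  \sum_(p | P p) (q == p)%:R = (P q)%:R :> R.
Proof.
rewrite -[RHS]mulr1 -(sum_delta P q (fun=> 1)).
by apply: eq_bigr => p _; rewrite mulr1.
Qed.

Section JfunLinear.
Variables (R : realFieldType) (X : finType) (I : finType).
Variables (w : I -> R) (nu : I -> {ffun X * X -> R}) (mu : {ffun X * X -> R}).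
Hypothesis mu_sum : forall p, mu p = \sum_i w i * nu i p.

Lemma M1_sum a : M1 mu a = \sum_i w i * M1 (nu i) a.
Proof.
rewrite ffunE; under eq_bigr do rewrite mu_sum.
by rewrite exchange_big; apply: eq_bigr => i _; rewrite ffunE mulr_sumr.
Qed.

Lemma Wcost_sum : Wcost mu = \sum_i w i * Wcost (nu i).
Proof.
rewrite /Wcost; under eq_bigr do rewrite mu_sum mulr_sumr.
rewrite exchange_big; apply: eq_bigr => i _; rewrite mulr_sumr.
by apply: eq_bigr => q _; rewrite mulrCA.
Qed.

Lemma Jfun_sum N lam : Jfun N lam mu = \sum_i w i * Jfun N lam (nu i).
Proof.
rewrite /Jfun Wcost_sum; under [RHS]eq_bigr do rewrite mulrDr.
rewrite big_split /=; congr (_ + _).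
under eq_bigr do rewrite M1_sum mulr_sumr.
rewrite exchange_big mulr_sumr; apply: eq_bigr => i _.
by rewrite !mulr_sumr; apply: eq_bigr => a _; ring.
Qed.

End JfunLinear.

Section Configurations.
Variables (R : realFieldType) (X : finType) (n : nat).
Local Notation N := n.+2.
Local Notation cfg := {ffun 'I_N -> X}.

Definition ord_one : 'I_N := Ordinal (isT : 1 < N)%N.

Definition cfg_perm (s : 'S_N) (x : cfg) : cfg := [ffun i => x (s i)].

Definition perm_invariant (g : {ffun cfg -> R}) : Prop :=
  forall s x, g (cfg_perm s x) = g x.

Definition pair_marginal (g : {ffun cfg -> R}) : {ffun X * X -> R} :=
  [ffun p => \sum_(x : cfg) ((x ord0, x ord_one) == p)%:R * g x].

Definition occ (x : cfg) : {ffun X -> R} := [ffun a => \sum_k (x k == a)%:R].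

Definition npairs : R := N%:R * (N%:R - 1).

(* The pair marginal of the uniform measure on the configurations with
   occupation numbers [m]. *)
Definition occ_pair (m : {ffun X -> R}) : {ffun X * X -> R} :=
  [ffun p => (m p.1 * m p.2 - (p.1 == p.2)%:R * m p.1) / npairs].

Lemma npairs_gt0 : 0 < npairs.
Proof. by rewrite mulr_gt0 ?ltr0Sn // subr_gt0 ltr1n. Qed.

Lemma npairs_neq0 : npairs != 0.
Proof. by rewrite gt_eqF ?npairs_gt0. Qed.

Lemma Nr_neq0 : N%:R != 0 :> R.
Proof. by rewrite pnatr_eq0. Qed.

Lemma Nr1_neq0 : N%:R - 1 != 0 :> R.
Proof. by rewrite subr_eq0 pnatr_eq1. Qed.

Lemma cfg_permK s : cancel (cfg_perm s) (cfg_perm s^-1).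
Proof. by move=> x; apply/ffunP => i; rewrite !ffunE permKV. Qed.

Lemma cfg_perm_inj s : injective (cfg_perm s).
Proof. exact: can_inj (cfg_permK s). Qed.

Lemma prodset_set1 (y : 'I_N -> X) :
  prodset (fun i => [set y i]) = [set finfun y].
Proof.
apply/setP => x; rewrite !inE; apply/forallP/eqP => [xy | -> i].
  by apply/ffunP => i; rewrite ffunE; apply/set1P/xy.
by rewrite ffunE inE.
Qed.

Lemma mem_prodset_perm s (A : 'I_N -> {set X}) x :
  (cfg_perm s x \in prodset (fun i => A (s i))) = (x \in prodset A).
Proof.
rewrite !inE; apply/forallP/forallP => xA i; last by rewrite ffunE.
by have := xA (s^-1 i)%g; rewrite ffunE permKV.
Qed.

Lemma symmetric_probE g : symmetric_prob g <-> is_prob g /\ perm_invariant g.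
Proof.
split=> [[g_prob g_sym] | [g_prob g_inv]]; split=> //.
  move=> s x; have := g_sym (fun i => [set x i]) s.
  by rewrite /mass !prodset_set1 ffunK !big_set1.
move=> A s; rewrite /mass [RHS](reindex_inj (@cfg_perm_inj s)).
by apply: eq_big => [x | x _]; rewrite ?mem_prodset_perm ?g_inv.
Qed.

Lemma in_cyl (A : {set X * X}) (x : cfg) :
  (x \in cyl N A) = ((x ord0, x ord_one) \in A).
Proof.
rewrite inE; apply/existsP/idP => [[i /existsP [j /and3P [/eqP i0 /eqP j1]]] | xA].
  suff [-> ->] : ord0 = i /\ ord_one = j by [].
  by split; apply: val_inj.
by exists ord0; apply/existsP; exists ord_one; rewrite xA.
Qed.

Lemma mass_pair_marginal g A : mass (pair_marginal g) A = mass g (cyl N A).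
Proof.
rewrite /mass; under eq_bigr do rewrite ffunE.
rewrite exchange_big [RHS]big_mkcond; apply: eq_bigr => x _.
by rewrite sum_delta in_cyl mulr_natl mulrb.
Qed.

Lemma N_repP mu :
  N_rep N mu <-> exists g, symmetric_prob g /\ mu = pair_marginal g.
Proof.
split=> [[_ [g [g_sym mu_g]]] | [g [g_sym ->]]].
  exists g; split=> //; apply/ffunP => p.
  by have := mu_g [set p]; rewrite -mass_pair_marginal /mass !big_set1.
split; last by exists g; split=> // A; rewrite mass_pair_marginal.
have [[g_ge0 g_sum1] _] := g_sym; split=> [p | ].
  by rewrite ffunE sumr_ge0 // => x _; rewrite mulr_ge0 ?ler0n.
have := mass_pair_marginal g setT; rewrite /mass.
under eq_bigl do rewrite in_setT.
by under [in RHS]eq_bigl do rewrite in_cyl in_setT; move=> ->.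
Qed.

Lemma perm_of_pair (k l : 'I_N) :
  k != l -> exists s : 'S_N, s ord0 = k /\ s ord_one = l.
Proof.
move=> kl; have tl_neq0 : tperm ord0 k l != ord0.
  by apply: contra_neq kl => /(congr1 (tperm ord0 k)); rewrite tpermK tpermL => <-.
exists (tperm ord_one (tperm ord0 k l) * tperm ord0 k)%g; rewrite !permM.
by rewrite tpermL tpermK (tpermD (x := ord_one)) // tpermL.
Qed.

Lemma pair_marginal_offdiag g (k l : 'I_N) a b : perm_invariant g -> k != l ->
  pair_marginal g (a, b) = \sum_(x : cfg) ((x k == a) && (x l == b))%:R * g x.
Proof.
move=> g_inv kl; have [s [s0 s1]] := perm_of_pair kl.
rewrite ffunE (reindex_inj (@cfg_perm_inj s)); apply: eq_bigr => x _.
by rewrite g_inv !ffunE s0 s1 xpair_eqE.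
Qed.

Lemma occ_perm s x : occ (cfg_perm s x) = occ x.
Proof.
apply/ffunP => a; rewrite !ffunE [RHS](reindex_inj (@perm_inj _ s)).
by apply: eq_bigr => k _; rewrite ffunE.
Qed.

Lemma sum_occ x : \sum_a occ x a = N%:R.
Proof.
under eq_bigr do rewrite ffunE; rewrite exchange_big.
under eq_bigr do rewrite sum_delta1.
by rewrite sumr_const card_ord.
Qed.

Lemma card_offdiag : \sum_(k : 'I_N) \sum_(l : 'I_N) ((k != l)%:R : R) = npairs.
Proof.
rewrite (_ : npairs = \sum_(k : 'I_N) (N%:R - 1)); last first.
  by rewrite sumr_const card_ord /npairs mulr_natl.
apply: eq_bigr => k _.
rewrite (bigD1 k) //= eqxx add0r (eq_bigr (fun=> 1)) => [|l /negbTE]; last first.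
  by rewrite eq_sym => ->.
by rewrite sumr_const cardC1 card_ord [in RHS]mulrSr addrK.
Qed.

Lemma sum_offdiag_occ (x : cfg) a b :
  \sum_k \sum_l (k != l)%:R * ((x k == a) && (x l == b))%:R
  = occ x a * occ x b - (a == b)%:R * occ x a.
Proof.
have diag k : \sum_l (k == l)%:R * ((x k == a) && (x l == b))%:R
              = (a == b)%:R * (x k == a)%:R :> R.
  by rewrite sum_delta mul1r; have [->|] := eqVneq (x k) a; rewrite ?mulr1 ?mulr0.
rewrite !ffunE big_distrlr mulr_sumr -sumrB; apply: eq_bigr => k _.
rewrite -diag -sumrB; apply: eq_bigr => l _.
by rewrite -mulnb natrM; case: eqVneq; rewrite ?mul0r ?mul1r ?subr0 ?subrr.
Qed.

Lemma pair_marginalE g : perm_invariant g ->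
  forall p, pair_marginal g p = \sum_x g x * occ_pair (occ x) p.
Proof.
move=> g_inv [a b]; apply: (mulIf npairs_neq0).
have offdiag k l : pair_marginal g (a, b) * (k != l)%:R
    = \sum_x g x * ((k != l)%:R * ((x k == a) && (x l == b))%:R).
  have [<-|kl] := eqVneq k l.
    by rewrite mulr0 big1 // => x _; rewrite mul0r mulr0.
  rewrite (pair_marginal_offdiag a b g_inv kl) mulr1.
  by apply: eq_bigr => x _; rewrite mul1r mulrC.
rewrite mulr_suml.
under [RHS]eq_bigr do rewrite ffunE -mulrA (divfK npairs_neq0) -sum_offdiag_occ.
rewrite -card_offdiag mulr_sumr; under [LHS]eq_bigr do rewrite mulr_sumr.
under eq_bigr do under eq_bigr do rewrite offdiag.
under eq_bigr do rewrite exchange_big; rewrite exchange_big.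
apply: eq_bigr => x _; rewrite mulr_sumr; apply: eq_bigr => k _.
by rewrite mulr_sumr.
Qed.

Lemma M1_occ_pair (m : {ffun X -> R}) : \sum_a m a = N%:R ->
  forall a, M1 (occ_pair m) a = m a / N%:R.
Proof.
move=> sum_m a; rewrite ffunE; under eq_bigr do rewrite ffunE /=.
rewrite -mulr_suml sumrB -mulr_sumr sum_m sum_delta mul1r /npairs.
by field; rewrite -natrD add2n Nr_neq0 Nr1_neq0.
Qed.

Lemma Wcost_occ_pair (m : {ffun X -> R}) : \sum_a m a = N%:R ->
  Wcost (occ_pair m) = (N%:R ^+ 2 - \sum_a m a ^+ 2) / npairs.
Proof.
move=> sum_m.
have term a b : ddisc R a b * occ_pair m (a, b)
                = (m a * m b - (a == b)%:R * (m a * m b)) / npairs.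
  rewrite ffunE /ddisc /=; have [<-|_] := eqVneq a b.
    by rewrite mul0r mul1r subrr mul0r.
  by rewrite !mul0r !subr0 mul1r.
have -> : Wcost (occ_pair m) = \sum_a \sum_b ddisc R a b * occ_pair m (a, b).
  by rewrite pair_bigA; apply: eq_bigr => -[].
under eq_bigr do under eq_bigr do rewrite term.
under eq_bigr do rewrite -mulr_suml sumrB -mulr_sumr sum_delta mul1r sum_m.
rewrite -mulr_suml sumrB -mulr_suml sum_m.
by under [X in _ - X]eq_bigr do rewrite -expr2.
Qed.

Lemma Jfun_occ_pair_gap (m0 m : {ffun X -> R}) :
  \sum_a m0 a = N%:R -> \sum_a m a = N%:R ->
  Jfun N (M1 (occ_pair m0)) (occ_pair m0) - Jfun N (M1 (occ_pair m0)) (occ_pair m)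
  = (\sum_a (m0 a - m a) ^+ 2) / npairs.
Proof.
move=> sum_m0 sum_m.
have J_occ (m' : {ffun X -> R}) : \sum_a m' a = N%:R ->
    Jfun N (M1 (occ_pair m0)) (occ_pair m')
    = (2 * \sum_a m0 a * m' a + N%:R ^+ 2 - \sum_a m' a ^+ 2) / npairs.
  move=> sum_m'; rewrite /Jfun Wcost_occ_pair //.
  under eq_bigr do rewrite !M1_occ_pair // mulrACA -expr2.
  rewrite -mulr_suml /npairs.
  by field; rewrite -natrD add2n Nr_neq0 Nr1_neq0.
have sqr_sum : \sum_a (m0 a - m a) ^+ 2
    = \sum_a m0 a ^+ 2 - 2 * \sum_a m0 a * m a + \sum_a m a ^+ 2.
  rewrite mulr_sumr -sumrB -big_split; apply: eq_bigr => a _ /=; ring.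
rewrite !J_occ // sqr_sum (eq_bigr (fun a => m0 a ^+ 2)) => [|a _]; last first.
  by rewrite expr2.
by field; exact: npairs_neq0.
Qed.

Lemma pair_marginal_occ_const g m : is_prob g -> perm_invariant g ->
  (forall x, g x != 0 -> occ x = m) -> pair_marginal g = occ_pair m.
Proof.
move=> [_ g_sum1] g_inv g_supp; apply/ffunP => p.
rewrite pair_marginalE // (eq_bigr (fun x => g x * occ_pair m p)) => [|x _].
  by rewrite -mulr_suml g_sum1 mul1r.
by have [->|/g_supp ->] := eqVneq (g x) 0; rewrite ?mul0r.
Qed.

Lemma Jfun_lt_occ_pair g (x0 : cfg) :
  symmetric_prob g -> pair_marginal g <> occ_pair (occ x0) ->
  Jfun N (M1 (occ_pair (occ x0))) (pair_marginal g)
  < Jfun N (M1 (occ_pair (occ x0))) (occ_pair (occ x0)).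
Proof.
move=> /symmetric_probE [[g_ge0 g_sum1] g_inv] g_neq.
set m0 := occ x0; set lam := M1 (occ_pair m0).
pose gap x := (\sum_a (m0 a - occ x a) ^+ 2) / npairs.
have gap_ge0 x : 0 <= gap x.
  by rewrite divr_ge0 ?sumr_ge0 ?(ltW npairs_gt0) // => a _; apply: sqr_ge0.
have gap_eq0 x : gap x = 0 -> occ x = m0.
  move/eqP; rewrite mulf_eq0 invr_eq0 (negbTE npairs_neq0) orbF => /eqP.
  move/psumr_eq0P => sq0; apply/ffunP => a; apply/esym/eqP.
  by rewrite -subr_eq0 -sqrf_eq0 sq0 // => b _; apply: sqr_ge0.
have J_gap :
    Jfun N lam (occ_pair m0) - Jfun N lam (pair_marginal g) = \sum_x g x * gap x.
  rewrite (Jfun_sum (pair_marginalE g_inv)) -[in LHS](mul1r (Jfun _ _ _)) -g_sum1.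
  rewrite mulr_suml -sumrB; apply: eq_bigr => x _.
  by rewrite -mulrBr Jfun_occ_pair_gap ?sum_occ.
have term_ge0 x : true -> 0 <= g x * gap x by rewrite mulr_ge0.
rewrite -subr_gt0 J_gap lt_def sumr_ge0 // andbT.
apply/eqP => /(psumr_eq0P term_ge0) gap0; apply: g_neq.
apply: pair_marginal_occ_const => // x gx; apply: gap_eq0.
by move: (gap0 x isT) => /eqP; rewrite mulf_eq0 (negbTE gx) => /eqP.
Qed.

Definition cond_prob (g : {ffun cfg -> R}) (S : {set cfg}) : {ffun cfg -> R} :=
  [ffun x => (x \in S)%:R * g x / mass g S].

Lemma mass_setC (g : {ffun cfg -> R}) (S : {set cfg}) :
  is_prob g -> mass g (~: S) = 1 - mass g S.
Proof.
case=> _ g_sum1; rewrite /mass -g_sum1 [in RHS](bigID (mem S)) /= addrC addrK.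
by apply: eq_bigl => x; rewrite in_setC.
Qed.

Lemma symmetric_prob_cond (g : {ffun cfg -> R}) (S : {set cfg}) :
  symmetric_prob g -> (forall s x, (cfg_perm s x \in S) = (x \in S)) ->
  0 < mass g S -> symmetric_prob (cond_prob g S).
Proof.
move=> /symmetric_probE [[g_ge0 _] g_inv] S_inv mS_gt0.
apply/symmetric_probE; split; last by move=> s x; rewrite !ffunE S_inv g_inv.
split=> [x | ]; first by rewrite ffunE divr_ge0 ?mulr_ge0 ?ler0n ?(ltW mS_gt0).
under eq_bigr do rewrite ffunE.
rewrite -mulr_suml; under eq_bigr do rewrite mulr_natl mulrb.
by rewrite -big_mkcond divff ?gt_eqF.
Qed.

Lemma pair_marginal_cond_mix (g : {ffun cfg -> R}) (S : {set cfg}) :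
  is_prob g -> 0 < mass g S < 1 ->
  forall p, pair_marginal g p = mass g S * pair_marginal (cond_prob g S) p
                + (1 - mass g S) * pair_marginal (cond_prob g (~: S)) p.
Proof.
move=> g_prob /andP [mS_gt0 mS_lt1] p.
have mS_neq0 : mass g S != 0 by rewrite gt_eqF.
have mC_neq0 : mass g (~: S) != 0 by rewrite mass_setC // subr_eq0 eq_sym lt_eqF.
rewrite !ffunE !mulr_sumr -big_split; apply: eq_bigr => x _.
rewrite !ffunE in_setC -mass_setC //.
by case: (x \in S) => /=; field; rewrite ?mS_neq0 ?mC_neq0.
Qed.

Lemma extreme_point_occ_pair mu :
  extreme_point (N_rep N) mu -> exists x0 : cfg, mu = occ_pair (occ x0).
Proof.
case=> /N_repP [g [g_sym ->]] mu_extr.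
have /symmetric_probE [g_prob g_inv] := g_sym; have [g_ge0 g_sum1] := g_prob.
have [x0 gx0_gt0] : exists x0, 0 < g x0.
  have : \sum_x g x != 0 by rewrite g_sum1 oner_eq0.
  by rewrite psumr_neq0 // => /hasP [x _ /andP [_ gx]]; exists x.
exists x0; pose S := [set x | occ x == occ x0].
have S_inv s x : (cfg_perm s x \in S) = (x \in S) by rewrite !inE occ_perm.
have SC_inv s x : (cfg_perm s x \in ~: S) = (x \in ~: S) by rewrite !in_setC S_inv.
have mS_gt0 : 0 < mass g S.
  by rewrite /mass (bigD1 x0) ?inE //= ltr_wpDr ?sumr_ge0.
have gS_sym := symmetric_prob_cond g_sym S_inv mS_gt0.
have <- : pair_marginal (cond_prob g S) = occ_pair (occ x0).
  have /symmetric_probE [gS_prob gS_inv] := gS_sym.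
  apply: pair_marginal_occ_const => // x; rewrite ffunE.
  by have [/[!inE]/eqP //|_] := boolP (x \in S); rewrite !mul0r eqxx.
have [mS1 | mS_neq1] := eqVneq (mass g S) 1.
  have mC0 : mass g (~: S) = 0 by rewrite mass_setC // mS1 subrr.
  congr pair_marginal; apply/ffunP => x; rewrite ffunE mS1 divr1.
  have [_|xC] := boolP (x \in S); first by rewrite mul1r.
  by rewrite mul0r (psumr_eq0P (fun y _ => g_ge0 y) mC0) // in_setC.
have mS_lt1 : mass g S < 1.
  by rewrite lt_neqAle mS_neq1 -subr_ge0 -mass_setC ?sumr_ge0.
have mS_range : 0 < mass g S < 1 by rewrite mS_gt0 mS_lt1.
have mC_gt0 : 0 < mass g (~: S) by rewrite mass_setC // subr_gt0.
have gC_sym := symmetric_prob_cond g_sym SC_inv mC_gt0.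
have mix := pair_marginal_cond_mix g_prob mS_range.
have rep_cond T :
    symmetric_prob (cond_prob g T) -> N_rep N (pair_marginal (cond_prob g T)).
  by move=> gT_sym; apply/N_repP; exists (cond_prob g T).
have eq_cond := mu_extr _ _ _ (rep_cond _ gS_sym) (rep_cond _ gC_sym) mS_range mix.
by apply/ffunP => p; rewrite mix -eq_cond -mulrDl addrC subrK mul1r.
Qed.

End Configurations.

Theorem corollary2p6 (R : realFieldType) (X : finType) (N : nat)
  (mustar : {ffun X * X -> R}) (lam : {ffun X -> R}) :
  (2 <= N)%N ->
  extreme_point (N_rep N) mustar ->
  lam = M1 mustar ->
  (forall mu : {ffun X * X -> R}, N_rep N mu -> mu <> mustar ->
     Jfun N lam mu < Jfun N lam mustar)
  /\
  (forall mu : {ffun X * X -> R}, N_rep N mu -> M1 mu = lam -> mu <> mustar ->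
     Wcost mu < Wcost mustar).
Proof.
case: N => [|[|n]] // _ mu_extr ->.
have [x0 ->] := extreme_point_occ_pair mu_extr.
set mu0 := occ_pair n (occ R x0).
have J_lt mu :
    N_rep n.+2 mu -> mu <> mu0 -> Jfun n.+2 (M1 mu0) mu < Jfun n.+2 (M1 mu0) mu0.
  by move=> /N_repP [g [g_sym ->]]; apply: Jfun_lt_occ_pair.
split=> // mu mu_rep M1_mu mu_neq.
by move: (J_lt mu mu_rep mu_neq); rewrite /Jfun M1_mu ltrD2l.
Qed.
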